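(* Let $[\mathcal{S},\mathcal{T},\mathcal{R}]$ be a backdoor triple such that $\mathcal{S}$, $\mathcal{T}$ and $\mathcal{R}$ are finite. Let $I_s=(V,C)$ be an instance of $\mathrm{CSP}(\mathcal{S})$ and $I_t=(V,C')$ an instance of $\mathrm{CSP}(\mathcal{T})$ on the same variable set. Then $\mathrm{Sol}(I_s)=\mathrm{Sol}(I_t)$ if and only if $I_s$ and $I_t$ have the same set of complete $\mathcal{R}$-certificates.
   Context: A partition scheme is a set $\mathcal{R}$ of binary relations over a domain $D$ that are pairwise disjoint, whose union is $D^2$, which contains equality on $D$, and which is closed under taking converses. A relation is qffo-definable in $\mathcal{R}$ if it is the solution set of a quantifier-free first-order formula (with equality, no parameters) over $\mathcal{R}$; a qffo reduct of $\mathcal{R}$ is a set of relations over $D$ each qffo-definable in $\mathcal{R}$. A backdoor triple $[\mathcal{S},\mathcal{T},\mathcal{R}]$ consists of a partition scheme $\mathcal{R}$ and two qffo reducts $\mathcal{S},\mathcal{T}$ of $\mathcal{R}$. $\mathrm{CSP}(\Gamma)$ instances are pairs $(V,C)$ of variables and constraints $R(x_1,\dots,x_k)$ with $R\in\Gamma$; $\mathrm{Sol}(I)$ is the set of satisfying assignments $V\to D$. Each qffo-definable relation is given by a DNF definition using only unnegated atoms $S(x,y)$, $S\in\mathcal{R}$. An $\mathcal{R}$-certificate for $I=(V,C)$ is a satisfiable $\mathrm{CSP}(\mathcal{R})$ instance $(V,C'')$ such that for each constraint of $C$ some clause of its DNF definition has all its literals in $C''$. It is complete if it contains a constraint on every ordered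 pair of (not necessarily distinct) variables of $V$. *)

From mathcomp Require Import all_boot.
Set Implicit Arguments. Unset Strict Implicit. Unset Printing Implicit Defensive.

Definition partition_scheme (D : Type) (RI : finType) (rel : RI -> D -> D -> Prop) : Prop :=
  [/\
      (forall (i j : RI) (x y : D), i <> j -> rel i x y -> rel j x y -> False),
      (forall x y : D, exists i, rel i x y),
      (exists i, forall x y : D, rel i x y <-> x = y)
    &
      (forall i, exists j, forall x y : D, rel j x y <-> rel i y x)].

(* A clause of a DNF definition of a k-ary relation: a list of unnegated atoms
   r(x_a, x_b), with r in R and a, b < k. *)
Definition atom (RI : finType) (k : nat) : Type := (RI * 'I_k * 'I_k)%type.

Definition clause_holds (D : Type) (RI : finType) (rel : RI -> D -> D -> Prop)
    (k : nat) (cl : seq (atom RI k)) (t : k.-tuple D) : Prop :=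
  forall a, a \in cl -> rel a.1.1 (tnth t a.1.2) (tnth t a.2).

(* A finite qffo reduct of R: a finite family of relations (of arbitrary
   arities), each given together with a DNF definition over R that defines it. *)
Record qffo_reduct (D : Type) (RI : finType) (rel : RI -> D -> D -> Prop) := {
  ridx : finType;
  rar : ridx -> nat;
  rrel : forall s : ridx, (rar s).-tuple D -> Prop;
  rdnf : forall s : ridx, seq (seq (atom RI (rar s)));
  rdnf_ok : forall (s : ridx) (t : (rar s).-tuple D),
      rrel t <-> exists2 cl, cl \in rdnf s & clause_holds rel cl t
}.

(* A CSP(S) instance on variable set V: its set of constraints
   s(x_1,...,x_k), given as a predicate on (relation, variable tuple). *)
Definition instance (D : Type) (RI : finType) (rel : RI -> D -> D -> Prop)
    (S : qffo_reduct rel) (V : Type) : Type :=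
  forall s : ridx S, (rar s).-tuple V -> Prop.

Definition Sol (D : Type) (RI : finType) (rel : RI -> D -> D -> Prop)
    (S : qffo_reduct rel) (V : Type) (C : instance S V) : (V -> D) -> Prop :=
  fun f => forall s t, C s t -> rrel (map_tuple f t).

Definition Rinstance (RI : finType) (V : Type) : Type := RI -> V -> V -> Prop.

Definition Rsatisfiable (D : Type) (RI : finType) (rel : RI -> D -> D -> Prop)
    (V : Type) (C2 : Rinstance RI V) : Prop :=
  exists f : V -> D, forall r x y, C2 r x y -> rel r (f x) (f y).

Definition certificate (D : Type) (RI : finType) (rel : RI -> D -> D -> Prop)
    (S : qffo_reduct rel) (V : Type) (C : instance S V) (C2 : Rinstance RI V) : Prop :=
  Rsatisfiable rel C2 /\
  forall (s : ridx S) (t : (rar s).-tuple V), C s t ->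
    exists2 cl, cl \in rdnf s &
      forall a, a \in cl -> C2 a.1.1 (tnth t a.1.2) (tnth t a.2).

Definition complete (RI : finType) (V : Type) (C2 : Rinstance RI V) : Prop :=
  forall x y : V, exists r, C2 r x y.

Definition complete_certificate (D : Type) (RI : finType) (rel : RI -> D -> D -> Prop)
    (S : qffo_reduct rel) (V : Type) (C : instance S V) (C2 : Rinstance RI V) : Prop :=
  certificate C C2 /\ complete C2.

From mathcomp Require Import all_boot.

(* Every assignment f : V -> D induces a complete CSP(R) instance, its R-type,
   which f satisfies. By disjointness of R, a complete instance satisfied by f
   is this R-type, and the R-type of f certifies an instance exactly when f solves
   it. So the complete R-certificates of an instance are precisely the R-types
   of its solutions, and the solution set and the set of complete certificates
   determine each other. *)

Set Implicit Arguments. Unset Strict Implicit. Unset Printing Implicit Defensive.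

Section Certificates.

Variables (D : Type) (RI : finType) (rel : RI -> D -> D -> Prop).

Definition rel_disjoint : Prop :=
  forall (i j : RI) (x y : D), i <> j -> rel i x y -> rel j x y -> False.

Definition rel_total : Prop := forall x y : D, exists i, rel i x y.

Variables (S : qffo_reduct rel) (V : Type).

Definition Rtype (f : V -> D) : Rinstance RI V := fun r x y => rel r (f x) (f y).

Definition covered (C : instance S V) (C2 : Rinstance RI V) : Prop :=
  forall (s : ridx S) (t : (rar s).-tuple V), C s t ->
    exists2 cl, cl \in rdnf s &
      forall a, a \in cl -> C2 a.1.1 (tnth t a.1.2) (tnth t a.2).

Lemma covered_ext (C : instance S V) (C2 C2' : Rinstance RI V) :
  (forall r x y, C2 r x y <-> C2' r x y) -> covered C C2 -> covered C C2'.
Proof.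
move=> E cov s t Cst; have [cl cl_dnf cl_C2] := cov s t Cst.
by exists cl => // a a_cl; apply/E/cl_C2.
Qed.

Lemma Sol_RtypeE (C : instance S V) (f : V -> D) :
  Sol C f <-> covered C (Rtype f).
Proof.
split=> [solf s t Cst | cov s t Cst].
- have [cl cl_dnf cl_holds] := (rdnf_ok _).1 (solf s t Cst).
  by exists cl => // a /cl_holds; rewrite !tnth_map.
- apply/rdnf_ok; have [cl cl_dnf cl_type] := cov s t Cst.
  by exists cl => // a /cl_type; rewrite /Rtype !tnth_map.
Qed.

Lemma complete_Rtype (f : V -> D) : rel_total -> complete (Rtype f).
Proof. by move=> tot x y; apply: tot. Qed.

Lemma complete_satisfied_Rtype (C2 : Rinstance RI V) (f : V -> D) :
  rel_disjoint -> complete C2 -> (forall r x y, C2 r x y -> Rtype f r x y) ->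
  forall r x y, C2 r x y <-> Rtype f r x y.
Proof.
move=> disj compl fC2 r x y; split; first exact: fC2.
have [r' C2r'] := compl x y => fr.
have [<- //|neq] := eqVneq r' r.
by case: (disj r' r _ _ (elimN eqP neq) (fC2 _ _ _ C2r') fr).
Qed.

Lemma complete_certificate_RtypeE (C : instance S V) (f : V -> D) :
  rel_total -> complete_certificate C (Rtype f) <-> Sol C f.
Proof.
move=> tot; split=> [[[_ cov] _] | solf]; first exact/Sol_RtypeE.
by split; [split; [exists f | exact/Sol_RtypeE] | exact: complete_Rtype].
Qed.

Lemma complete_certificateP (C : instance S V) (C2 : Rinstance RI V) :
  rel_disjoint -> rel_total ->
  complete_certificate C C2 <->
  exists f, (forall r x y, C2 r x y <-> Rtype f r x y) /\ Sol C f.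
Proof.
move=> disj tot; split=> [[[[f fC2] cov] compl] | [f [E solf]]].
  have E := complete_satisfied_Rtype disj compl fC2.
  by exists f; split=> //; apply/Sol_RtypeE/(covered_ext E).
have cov : covered C C2.
  apply: covered_ext ((Sol_RtypeE C f).1 solf) => r x y; exact: iff_sym (E r x y).
split; first by split=> //; exists f => r x y /E.
by move=> x y; have [r fr] := tot (f x) (f y); exists r; apply/E.
Qed.

End Certificates.

Theorem mainTheorem2 (D : Type) (RI : finType) (rel : RI -> D -> D -> Prop)
    (HR : partition_scheme rel) (S T : qffo_reduct rel) (V : finType)
    (Cs : instance S V) (Ct : instance T V) :
  (forall f : V -> D, Sol Cs f <-> Sol Ct f) <->
  (forall C2 : Rinstance RI V, complete_certificate Cs C2 <-> complete_certificate Ct C2).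
Proof.
have [disj tot _ _] := HR.
split=> [sameSol C2 | sameCert f].
  split=> /(complete_certificateP _ _ disj tot) [f [E solf]];
    by apply/(complete_certificateP _ _ disj tot); exists f; split=> //; apply/sameSol.
split=> /(complete_certificate_RtypeE _ _ tot) cert;
  by apply/(complete_certificate_RtypeE _ _ tot)/sameCert.
Qed.
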